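(* Let $\mathbb{C}$ be a locally small category and $\mathbb{C}_{\mathit{fin}}$ a full subcategory satisfying (C1)–(C5) below. Let $\mathbb{A}$ be a full subcategory of $\mathbb{C}_{\mathit{fin}}$, let $F\in\mathrm{Ob}(\mathbb{C})$ be universal and locally finite for $\mathbb{A}$, and let $A\in\mathrm{Ob}(\mathbb{A})$ and $t\ge2$ be arbitrary. Assume that for every $B\in\mathrm{Ob}(\mathbb{A})$ with $A\to B$ there is a coloring $\lambda_B:\hom(A,B)\to\{0,\dots,t-1\}$ essential at $B$. Then there exists an essential coloring $\gamma:\hom(A,F)\to\{0,\dots,t-1\}$.
   Context: Write $A\to B$ if $\hom(A,B)\ne\varnothing$. Conditions: (C1) all morphisms of $\mathbb{C}$ are monomorphisms; (C2) $\mathrm{Ob}(\mathbb{C}_{\mathit{fin}})$ is a set; (C3) $\hom(A,B)$ is finite for $A,B\in\mathrm{Ob}(\mathbb{C}_{\mathit{fin}})$; (C4) for every $F\in\mathrm{Ob}(\mathbb{C})$ there is $A\in\mathrm{Ob}(\mathbb{C}_{\mathit{fin}})$ with $A\to F$; (C5) for every $B\in\mathrm{Ob}(\mathbb{C}_{\mathit{fin}})$ the set $\{A\in\mathrm{Ob}(\mathbb{C}_{\mathit{fin}}):A\to B\}$ is finite. $F$ is universal for $\mathbb{A}$ if $A\to F$ for all $A\in\mathrm{Ob}(\mathbb{A})$. $F$ is locally finite for $\mathbb{A}$ if for all $A,B\in\mathrm{Ob}(\mathbb{A})$, $e\in\hom(A,F)$, $f\in\hom(B,F)$ there exist $D\in\mathrm{Ob}(\mathbb{A})$,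 $r\in\hom(D,F)$, $p\in\hom(A,D)$, $q\in\hom(B,D)$ with $r\cdot p=e$, $r\cdot q=f$, such that for every $H\in\mathrm{Ob}(\mathbb{C})$, $r'\in\hom(H,F)$, $p'\in\hom(A,H)$, $q'\in\hom(B,H)$ with $r'\cdot p'=e$, $r'\cdot q'=f$ there is $s\in\hom(D,H)$ with $r'\cdot s=r$, $s\cdot p=p'$, $s\cdot q=q'$. For $\chi:\hom(A,F)\to\{0,\dots,k-1\}$ and $w\in\hom(B,F)$, $\chi^{(w)}(f)=\chi(w\cdot f)$ for $f\in\hom(A,B)$; $\ker g=\{(x,y):g(x)=g(y)\}$. A coloring $\lambda:\hom(A,B)\to\{0,\dots,t-1\}$ is essential at $B$ if for every $k\ge2$ and every $\chi:\hom(A,F)\to\{0,\dots,k-1\}$ there is $w\in\hom(B,F)$ with $\ker\lambda\subseteq\ker\chi^{(w)}$. A coloring $\gamma:\hom(A,F)\to\{0,\dots,t-1\}$ is essential if for every $B\in\mathrm{Ob}(\mathbb{A})$ with $A\to B$ and every $w\in\hom(B,F)$ the coloring $\gamma^{(w)}$ is essential at $B$. *)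

From mathcomp Require Import all_boot.
From Stdlib Require Import List.

Set Implicit Arguments.
Unset Strict Implicit.
Unset Printing Implicit Defensive.

Record Category := {
  Ob :> Type;
  hom : Ob -> Ob -> Type;
  idm : forall A, hom A A;
  comp : forall A B C, hom B C -> hom A B -> hom A C;
  comp_assoc : forall A B C D (h : hom C D) (g : hom B C) (f : hom A B),
      comp h (comp g f) = comp (comp h g) f;
  comp_id_l : forall A B (f : hom A B), comp (idm B) f = f;
  comp_id_r : forall A B (f : hom A B), comp f (idm A) = f
}.

Arguments hom {c} _ _.
Arguments idm {c} _.
Arguments comp {c A B C} _ _.

Section Defs.
Variable C : Category.

Definition arrow (A B : C) : Prop := inhabited (hom A B).

Definition finite_type (T : Type) : Prop :=
  exists l : list T, forall x : T, In x l.

(* Full subcategories are given by predicates on objects.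
   fin : the objects of C_fin. *)
Definition C1 : Prop :=
  forall (X Y Z : C) (f : hom Y Z) (g h : hom X Y), comp f g = comp f h -> g = h.
Definition C3 (fin : C -> Prop) : Prop :=
  forall X Y : C, fin X -> fin Y -> finite_type (hom X Y).
Definition C4 (fin : C -> Prop) : Prop :=
  forall Fo : C, exists X : C, fin X /\ arrow X Fo.
Definition C5 (fin : C -> Prop) : Prop :=
  forall Y : C, fin Y -> exists l : list C, forall X : C, fin X -> arrow X Y -> In X l.

Definition universal (Aob : C -> Prop) (F : C) : Prop :=
  forall X : C, Aob X -> arrow X F.

Definition locally_finite (Aob : C -> Prop) (F : C) : Prop :=
  forall (X Y : C), Aob X -> Aob Y ->
  forall (e : hom X F) (f : hom Y F),
  exists (D : C) (r : hom D F) (p : hom X D) (q : hom Y D),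
    Aob D /\ comp r p = e /\ comp r q = f /\
    forall (H : C) (r' : hom H F) (p' : hom X H) (q' : hom Y H),
      comp r' p' = e -> comp r' q' = f ->
      exists s : hom D H, comp r' s = r /\ comp s p = p' /\ comp s q = q'.

Definition recolor (X Y F : C) (k : nat) (chi : hom X F -> 'I_k) (w : hom Y F)
  : hom X Y -> 'I_k := fun f => chi (comp w f).

Definition ker_sub (T : Type) (k1 k2 : nat) (g1 : T -> 'I_k1) (g2 : T -> 'I_k2) : Prop :=
  forall x y : T, g1 x = g1 y -> g2 x = g2 y.

Definition essential_at (F X Y : C) (t : nat) (lam : hom X Y -> 'I_t) : Prop :=
  forall (k : nat), 2 <= k ->
  forall chi : hom X F -> 'I_k,
  exists w : hom Y F, ker_sub lam (recolor chi w).

Definition essential (Aob : C -> Prop) (F X : C) (t : nat) (gam : hom X F -> 'I_t) : Prop :=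
  forall Y : C, Aob Y -> arrow X Y ->
  forall w : hom Y F, essential_at F (recolor gam w).

End Defs.

(* The t-colorings of hom(A,F) form a product of finite discrete spaces, hence
   a compact space, and the requirement "gamma^(w) is essential at B" only
   involves the finitely many values of gamma on w . hom(A,B) (C3). So it
   suffices to meet finitely many requirements (B_i, w_i) at once. Local
   finiteness amalgamates the w_i, together with some arrow A -> F, into one
   r : D -> F through which all of them factor; since r is monic (C1), an
   essential coloring lambda of hom(A,D) is of the form gamma^(r), and then
   gamma^(w_i) = lambda^(p_i) is essential, as essentiality survives
   recoloring along any arrow. Compactness is realised by an ultrafilter
   limit. *)
From mathcomp Require Import all_boot.
From mathcomp Require Import boolp classical_sets filter.
From Stdlib Require List.

Set Implicit Arguments.
Unset Strict Implicit.
Unset Printing Implicit Defensive.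

Lemma filter_forall_In (S X : Type) (U : set_system S) (Q : X -> set S)
    (l : list X) :
  Filter U -> (forall x, List.In x l -> U (Q x)) ->
  U (fun s => forall x, List.In x l -> Q x s).
Proof.
move=> UF; elim: l => [|x l IHl] UQ.
  by apply: filterS filterT => s _ x [].
apply: filterS (filterI (UQ x (or_introl erefl)) (IHl _)).
  by move=> s [Qxs Qls] y [<-|ly]; [exact: Qxs | exact: Qls].
by move=> y ly; apply: UQ; right.
Qed.

Lemma ultra_value (S : Type) (U : set_system S) (n : nat) (h : S -> 'I_n) :
  UltraFilter U -> exists i, U (fun s => h s = i).
Proof.
move=> UU; apply: contrapT => no_value.
have U_neq i : U (fun s => h s <> i).
  have [Ui|//] := in_ultra_setVsetC [set s | h s = i] UU.
  by case: no_value; exists i.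
by have [s /(_ (h s))] := filter_ex (filter_forall _ U_neq).
Qed.

Definition determined_by {T : Type} {n : nat} (Q : set (T -> 'I_n))
    (l : list T) :=
  forall g h, (forall x, List.In x l -> g x = h x) -> Q g -> Q h.

Section FiniteColoringCompactness.

Variables (I T : Type) (n : nat) (P : I -> set (T -> 'I_n)).

Hypothesis P_fip : forall js : list I,
  exists g, forall i, List.In i js -> P i g.

Definition fip_filter : set_system (T -> 'I_n) :=
  fun Q => exists js : list I, forall g, (forall i, List.In i js -> P i g) -> Q g.

Lemma fip_filter_proper : ProperFilter fip_filter.
Proof.
apply: Build_ProperFilter_ex.
  by move=> Q [js jsQ]; have [g Pg] := P_fip js; exists g; exact: jsQ.
split; first by exists nil.
- move=> Q1 Q2 [js1 jsQ1] [js2 jsQ2]; exists (js1 ++ js2) => g Pg.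
  by split; [apply: jsQ1 | apply: jsQ2] => i ii; apply: Pg;
    apply: List.in_or_app; [left | right].
- by move=> Q1 Q2 Q12 [js jsQ1]; exists js => g /jsQ1 /Q12.
Qed.

Hypothesis P_finite : forall i, exists l, determined_by (P i) l.

Theorem finite_coloring_compactness : exists g, forall i, P i g.
Proof.
have [U [UU fipU]] := ultraFilterLemma fip_filter_proper.
have limit x := cid (ultra_value (fun g : T -> 'I_n => g x) UU).
exists (fun x => projT1 (limit x)) => i.
have [l Pil] := P_finite i.
have U_limit : U (fun g => forall x, List.In x l -> g x = projT1 (limit x)).
  by apply: filter_forall_In => x _; exact: projT2 (limit x).
have U_Pi : U (P i).
  by apply: fipU; exists [:: i] => g; apply; left.
have [g [Pig gl]] := filter_ex (filterI U_Pi U_limit).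
exact: Pil Pig.
Qed.

End FiniteColoringCompactness.

Section Recoloring.

Variable C : Category.

Lemma recolor_comp (X Y Z F : C) k (chi : hom X F -> 'I_k) (w : hom Y F)
    (p : hom Z Y) :
  recolor (recolor chi w) p = recolor chi (comp w p).
Proof. by apply: funext => f; rewrite /recolor comp_assoc. Qed.

Lemma essential_at_recolor (F X Y D : C) t (lam : hom X D -> 'I_t)
    (p : hom Y D) :
  essential_at F lam -> essential_at F (recolor lam p).
Proof.
move=> lam_ess k k_ge2 chi; have [w lam_chi] := lam_ess k k_ge2 chi.
by exists (comp w p) => f g /lam_chi; rewrite -recolor_comp.
Qed.

Definition monic (D F : C) (r : hom D F) :=
  forall X (g h : hom X D), comp r g = comp r h -> g = h.

Lemma monic_recolor_onto (X D F : C) t (r : hom D F) (lam : hom X D -> 'I_t) :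
  monic r -> 0 < t -> exists gam : hom X F -> 'I_t, recolor gam r = lam.
Proof.
move=> r_monic t_gt0.
exists (fun x => if pselect (exists f, comp r f = x) is left rf
                 then lam (projT1 (cid rf)) else Ordinal t_gt0).
apply: funext => f; rewrite /recolor.
case: pselect => [rf|]; last by case; exists f.
by case: cid => f' /= /r_monic ->.
Qed.

End Recoloring.

Section Amalgamation.

Variables (C : Category) (Aob : C -> Prop) (F : C).
Hypothesis F_lf : locally_finite Aob F.

Record Aarrow := Aarrow_of { src : C; src_in : Aob src; arr : hom src F }.

Definition factors_through (D B : C) (r : hom D F) (w : hom B F) :=
  exists p : hom B D, comp r p = w.

Lemma locally_finite_amalgam (a : Aarrow) (bs : list Aarrow) :
  exists (D : C) (r : hom D F), Aob D /\
    forall b, List.In b (a :: bs) -> factors_through r (arr b).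
Proof.
elim: bs => [|b bs [D [r [AD r_amalg]]]].
  exists (src a), (arr a); split; first exact: src_in.
  by move=> b [<-|[]]; exists (idm _); rewrite comp_id_r.
have [D' [r' [p [q [AD' [r'p [r'q _]]]]]]] :=
  F_lf (src_in b) AD (arr b) r.
exists D', r'; split=> // c [<-|[<-|c_bs]].
- have [pa <-] := r_amalg a (or_introl erefl).
  by exists (comp q pa); rewrite comp_assoc r'q.
- by exists p.
- have [pc <-] := r_amalg c (or_intror c_bs).
  by exists (comp q pc); rewrite comp_assoc r'q.
Qed.

Variables (A : C) (t : nat).
Hypotheses (C_monic : C1 C) (F_univ : universal Aob F) (A_in : Aob A)
  (t_gt0 : 0 < t).
Hypothesis lam_ess : forall B : C, Aob B -> arrow A B ->
  exists lam : hom A B -> 'I_t, essential_at F lam.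

Lemma essential_recolorings_fip : forall bs : list Aarrow,
  exists gam : hom A F -> 'I_t,
    forall b, List.In b bs -> essential_at F (recolor gam (arr b)).
Proof.
move=> bs; have [e] := F_univ A_in.
have [D [r [AD r_amalg]]] := locally_finite_amalgam (Aarrow_of A_in e) bs.
have [pA _] := r_amalg _ (or_introl erefl).
have [lam lamD] := lam_ess AD (inhabits pA).
have r_monic : monic r by move=> X; exact: C_monic.
have [gam gam_r] := monic_recolor_onto lam r_monic t_gt0.
exists gam => b b_bs; have [p <-] := r_amalg b (or_intror b_bs).
by rewrite -recolor_comp gam_r; exact: essential_at_recolor.
Qed.

End Amalgamation.

Theorem lemma3p5 (C : Category) (fin : C -> Prop)
  (HC1 : C1 C) (HC3 : C3 fin) (HC4 : C4 fin) (HC5 : C5 fin)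
  (Aob : C -> Prop) (HAfin : forall X : C, Aob X -> fin X)
  (F : C) (Huniv : universal Aob F) (Hlf : locally_finite Aob F)
  (A : C) (HA : Aob A) (t : nat) (Ht : 2 <= t)
  (Hlam : forall B : C, Aob B -> arrow A B ->
          exists lam : hom A B -> 'I_t, essential_at F lam) :
  exists gam : hom A F -> 'I_t, essential Aob gam.
Proof.
have t_gt0 : 0 < t by apply: leq_trans Ht.
pose P (b : Aarrow Aob F) (gam : hom A F -> 'I_t) :=
  essential_at F (recolor gam (arr b)).
have P_finite b : exists l, determined_by (P b) l.
  have [l l_all] := HC3 A (src b) (HAfin A HA) (HAfin _ (src_in b)).
  exists (List.map (comp (arr b)) l) => g h gh.
  rewrite /P; suff -> : recolor g (arr b) = recolor h (arr b) by [].
  by apply: funext => f; apply: gh; apply: List.in_map.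
have [gam gam_ess] := finite_coloring_compactness
  (essential_recolorings_fip Hlf HC1 Huniv HA t_gt0 Hlam) P_finite.
by exists gam => B AB _ w; exact: gam_ess (Aarrow_of AB w).
Qed.
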